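(* For $0\le r_1,r_2\le n$, $0\le s\le N(r_1,r_2)$ and all $t\in\mathbb C$, $$\lambda_s^{r_1,r_2}(t)=\binom{r_2}{s}^{-1}\sum_{j=0}^s\binom{t}{j}\binom{r_2-t}{s-j}\lambda_s^{r_1,s}(j),\qquad\text{where}\quad \lambda_s^{r_1,s}(j)=(-1)^j\frac{(r_1-s+1)_j}{[n-r_1]_j}.$$
   Context: Let $\Omega$ be a finite set with $|\Omega|=n\ge1$, $G=S(\Omega)$, $X=\mathcal P(\Omega)$, $X_r=\{x\in X:|x|=r\}$, $G$ acting on $L^2(X)$ (complex functions on $X$; $L^2(X_r)$ = functions supported on $X_r$) by $(\rho(g)\psi)(x)=\psi(g^{-1}x)$. For $0\le s\le\min(r,n-r)$, $L^2(X_r)_s$ is the unique irreducible $G$-subspace of $L^2(X_r)$ isomorphic to the irreducible representation associated with the partition $(n-s,s)$. $N(r_1,r_2)=\min(r_1,n-r_1,r_2,n-r_2)$. For $0\le s\le N(r_1,r_2)$, $\Lambda_s^{r_1,r_2}$ is a $G$-equivariant map $L^2(X)\to L^2(X)$ sending $L^2(X_{r_1})_s$ into $L^2(X_{r_2})_s$ and vanishing on its orthogonal complement, with kernel $\lambda$ defined on integers $\max(0,r_2-r_1)\le k\le\min(n-r_1,r_2)$ by $(\Lambda_s^{r_1,r_2}\psi)(x_2)=\sum_{x_1\in X_{r_1}}\lambda(|x_2\setminus x_1|)\psi(x_1)$. The kernel agrees on its domain with a unique polynomial of degree $s$ which is nonzero at $0$; $\Lambda_s^{r_1,r_2}$ is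 normalized so that this polynomial takes the value $1$ at $t=0$, and $\lambda_s^{r_1,r_2}(t)$, $t\in\mathbb C$, denotes this polynomial. Binomials $\binom{t}{j}=[t]_j/j!$ for complex $t$; $[\alpha]_k=\alpha(\alpha-1)\cdots(\alpha-k+1)$, $(\alpha)_k=\alpha(\alpha+1)\cdots(\alpha+k-1)$. *)

From HB Require Import structures.
From mathcomp Require Import all_boot all_order fingroup perm all_algebra.
Set Implicit Arguments. Unset Strict Implicit. Unset Printing Implicit Defensive.
Import Order.TTheory GRing.Theory Num.Theory.
Local Open Scope ring_scope.

(* Omega = 'I_n, X = {set 'I_n}, L^2(X) = complex-valued functions on X,
   with complex numbers modelled by an arbitrary numClosedFieldType C
   (e.g. algC, or complex R). *)
Notation fn C n := {ffun {set 'I_n} -> (GRing.Field.sort C)^o} (only parsing).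

Definition rho (C : numClosedFieldType) (n : nat) (g : {perm 'I_n}) (u : fn C n)
  : fn C n := [ffun x : {set 'I_n} => u ((g^-1)%g @: x)].

Definition subspace (C : numClosedFieldType) (n : nat) (W : fn C n -> Prop) :=
  W 0 /\ (forall (a : C) u v, W u -> W v -> W (a *: u + v)).

Definition Ginvariant (C : numClosedFieldType) (n : nat) (W : fn C n -> Prop) :=
  forall (g : {perm 'I_n}) u, W u -> W (rho g u).

Definition supported_on (C : numClosedFieldType) (n r : nat) (u : fn C n) :=
  forall x : {set 'I_n}, #|x| != r -> u x = 0.

Definition irreducibleG (C : numClosedFieldType) (n : nat) (W : fn C n -> Prop) :=
  [/\ subspace W, Ginvariant W, (exists u, W u /\ u != 0) &
      forall U : fn C n -> Prop, subspace U -> Ginvariant U ->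
        (forall u, U u -> W u) ->
        (forall u, U u -> u = 0) \/ (forall u, W u -> U u)].

Definition Giso (C : numClosedFieldType) (n : nat) (V W : fn C n -> Prop) :=
  exists f : fn C n -> fn C n,
    [/\ forall (a : C) u v, f (a *: u + v) = a *: f u + f v,
        forall u, V u -> W (f u),
        forall w, W w -> exists u, V u /\ f u = w,
        forall u v, V u -> V v -> f u = f v -> u = v &
        forall g u, V u -> f (rho g u) = rho g (f u)].

Definition delta (C : numClosedFieldType) (n : nat) (x : {set 'I_n}) : fn C n :=
  [ffun y => (y == x)%:R].

(* Polytabloid of shape (n-s,s): the injection e encodes a tableau whose
   i-th column (i < s) is (e (i,true), e (i,false)); tabloids of shape
   (n-s,s) are identified with their second row, an s-subset of Omega. *)
Definition polytab (C : numClosedFieldType) (n s : nat)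
  (e : {ffun 'I_s * bool -> 'I_n}) : fn C n :=
  \sum_(eps : {ffun 'I_s -> bool})
     ((-1) ^+ #|[set i | eps i]|) *: @delta C n [set e (i, eps i) | i : 'I_s].

Definition Specht (C : numClosedFieldType) (n s : nat) (u : fn C n) : Prop :=
  exists c : {ffun {ffun 'I_s * bool -> 'I_n} -> C},
    u = \sum_(e : {ffun 'I_s * bool -> 'I_n} | injectiveb e) c e *: @polytab C n s e.

(* W is "L^2(X_r)_s": an irreducible G-subspace of L^2(X_r) isomorphic to the
   irreducible representation associated with the partition (n-s,s). *)
Definition IsComp (C : numClosedFieldType) (n r s : nat) (W : fn C n -> Prop) :=
  [/\ irreducibleG W, forall u, W u -> supported_on r u & Giso (@Specht C n s) W].

Definition inner (C : numClosedFieldType) (n : nat) (u v : fn C n) : C :=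
  \sum_(x : {set 'I_n}) (u x : C) * ((v x : C)^*).

Definition IsLambda (C : numClosedFieldType) (n r1 r2 s : nat) (p : {poly C}) :=
  exists (W1 W2 : fn C n -> Prop) (L : fn C n -> fn C n),
    IsComp r1 s W1 /\ IsComp r2 s W2 /\
    (forall g u, L (rho g u) = rho g (L u)) /\
    (forall u, W1 u -> W2 (L u)) /\
    (forall u, (forall w, W1 w -> inner w u = 0) -> L u = 0) /\
    (forall u (x2 : {set 'I_n}), #|x2| = r2 ->
       L u x2 = \sum_(x1 : {set 'I_n} | #|x1| == r1)
                   p.[(#|x2 :\: x1|)%:R] * u x1) /\
    size p = s.+1 /\ p.[0] = 1.

Definition Nmin (n r1 r2 : nat) : nat := minn (minn r1 (n - r1)) (minn r2 (n - r2)).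

Definition falling (C : numClosedFieldType) (t : C) (j : nat) : C :=
  \prod_(i < j) (t - i%:R).
Definition rising (C : numClosedFieldType) (a : C) (j : nat) : C :=
  \prod_(i < j) (a + i%:R).
Definition cbinom (C : numClosedFieldType) (t : C) (j : nat) : C :=
  falling t j / (j`!)%:R.

Definition lam0 (C : numClosedFieldType) (n r1 s j : nat) : C :=
  (-1) ^+ j * rising (r1%:R - s%:R + 1 : C) j / falling ((n - r1)%N%:R : C) j.

From HB Require Import structures.
From mathcomp Require Import all_boot all_order fingroup perm all_algebra.
From mathcomp Require Import zify ring.
Import Order.TTheory GRing.Theory Num.Theory.
Set Implicit Arguments. Unset Strict Implicit. Unset Printing Implicit Defensive.
Local Open Scope ring_scope.

(* Write W1 = L^2(X_r1)_s.  Inside W1, the vectors orthogonal to every function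
   of degree < s on the Boolean cube (span of x |-> [B \subset x], #|B| < s) form
   an invariant subspace; it contains the image of a polytabloid, which changes
   sign under s disjoint transpositions and is therefore orthogonal to each such
   indicator, so by irreducibility it is all of W1.  Since Lambda kills the
   orthogonal of W1, every row x1 |-> lambda(#|x2 :\: x1|) of its kernel is
   orthogonal to q(#|x2 :\: x1|) for all polynomials q of degree < s.  The
   right-hand side is an average over the s-subsets y of x2 of the functions
   x1 |-> lam0 #|y :\: x1|, which have the same orthogonality by a finite
   difference identity.  A polynomial of degree < s with this orthogonality
   vanishes at s distinct points, so both degree-s polynomials are proportional,
   and they agree at 0.  The case r2 = s gives the values lambda_s^{r1,s}(j). *)

Section LowDegree.
Variables (C : numClosedFieldType) (T : finType).

Inductive low_degree (k : nat) : ({set T} -> C) -> Prop :=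
| low_degree_sub c (B : {set T}) : (#|B| <= k)%N -> low_degree k (fun x => c * (B \subset x)%:R)
| low_degreeD f g : low_degree k f -> low_degree k g -> low_degree k (fun x => f x + g x)
| low_degree_ext f g : low_degree k f -> f =1 g -> low_degree k g.

Lemma low_degree_cst k (c : C) : low_degree k (fun _ => c).
Proof.
by apply: low_degree_ext (@low_degree_sub k c set0 _) _ => [|x]; rewrite ?cards0 ?sub0set ?mulr1.
Qed.

Lemma low_degreeW k k' f : (k <= k')%N -> low_degree k f -> low_degree k' f.
Proof.
move=> lekk'; elim=> [c B leBk|f1 f2 _ h1 _ h2|f1 f2 _ h1 e].
- by apply: low_degree_sub; apply: leq_trans lekk'.
- exact: low_degreeD.
- exact: low_degree_ext h1 e.
Qed.

Lemma low_degreeM k1 k2 f g : low_degree k1 f -> low_degree k2 g ->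
  low_degree (k1 + k2) (fun x => f x * g x).
Proof.
move=> hf; elim: hf g => [c B leBk|f1 f2 _ h1 _ h2|f1 f2 _ h1 e] g hg.
- elim: hg => [d B' leB'k|g1 g2 _ k1' _ k2'|g1 g2 _ k1' e].
  + have leUk : (#|B :|: B'| <= k1 + k2)%N.
      exact: leq_trans (leq_card_setU _ _) (leq_add _ _).
    apply: low_degree_ext (low_degree_sub (c * d) leUk) _ => x.
    by rewrite subUset; case: (B \subset x); case: (B' \subset x); rewrite ?mulr1 ?mulr0 ?mul0r.
  + by apply: low_degree_ext (low_degreeD k1' k2') _ => x; rewrite mulrDr.
  + by apply: low_degree_ext k1' _ => x; rewrite e.
- by apply: low_degree_ext (low_degreeD (h1 g hg) (h2 g hg)) _ => x; rewrite mulrDl.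
- by apply: low_degree_ext (h1 g hg) _ => x; rewrite e.
Qed.

Lemma low_degree_sum k (I : Type) (r : seq I) (F : I -> {set T} -> C) :
  (forall i, low_degree k (F i)) -> low_degree k (fun x => \sum_(i <- r) F i x).
Proof.
move=> hF; elim: r => [|i r IH].
  by apply: low_degree_ext (low_degree_cst k 0) _ => x; rewrite big_nil.
by apply: low_degree_ext (low_degreeD (hF i) IH) _ => x; rewrite big_cons.
Qed.

Lemma low_degree_horner k f (q : {poly C}) :
  low_degree 1 f -> (size q <= k.+1)%N -> low_degree k (fun x => q.[f x]).
Proof.
move=> hf leqk.
have hX m : low_degree m (fun x => f x ^+ m).
  elim: m => [|m IH]; first exact: low_degree_cst.
  by apply: low_degree_ext (low_degreeM hf IH) _ => x; rewrite exprS.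
apply: low_degree_ext
  (low_degree_sum (index_enum 'I_(size q)) (F := fun i x => q`_i * f x ^+ i) _) _ => [i|x].
  apply: low_degreeW (low_degreeM (low_degree_cst 0 q`_i) (hX i)).
  by rewrite add0n -ltnS (leq_trans _ leqk).
by rewrite horner_coef.
Qed.

Lemma low_degree_card_setD (A : {set T}) : low_degree 1 (fun x => #|A :\: x|%:R).
Proof.
pose F (e : T) (x : {set T}) : C := if e \in A then - ([set e] \subset x)%:R else 0.
have hF e : low_degree 1 (F e).
  rewrite /F; case: (e \in A); last exact: low_degree_cst.
  by apply: low_degree_ext (low_degree_sub (-1) (eq_leq (cards1 e))) _ => x; rewrite mulN1r.
have := low_degreeD (low_degree_cst 1 #|A|%:R) (low_degree_sum (index_enum T) hF).
move=> h; apply: (low_degree_ext h) => x.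
rewrite /F -big_mkcond /= sumrN -(cardsID x A) natrD addrAC.
suff -> : \sum_(e in A) ([set e] \subset x)%:R = #|A :&: x|%:R :> C by rewrite subrr add0r.
rewrite -sum1_card natr_sum [RHS]big_mkcond [LHS]big_mkcond.
by apply: eq_bigr => e _; rewrite sub1set !inE; case: (e \in A); case: (e \in x).
Qed.

Definition low_orthogonal (s : nat) (w : {set T} -> C) :=
  forall B : {set T}, (#|B| < s)%N -> \sum_x w x * (B \subset x)%:R = 0.

Lemma low_degree_orth s w f : low_orthogonal s.+1 w -> low_degree s f -> \sum_x w x * f x = 0.
Proof.
move=> hw; elim=> [c B leBs|f1 f2 _ h1 _ h2|f1 f2 _ h1 e].
- by under eq_bigr => x _ do rewrite mulrCA; rewrite -mulr_sumr hw ?mulr0.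
- by under eq_bigr => x _ do rewrite mulrDr; rewrite big_split /= h1 h2 addr0.
- by rewrite -[RHS]h1; apply: eq_bigr => x _; rewrite e.
Qed.

Lemma low_orthogonal_horner_card_setD s w (A : {set T}) (q : {poly C}) :
  low_orthogonal s w -> (size q <= s)%N -> \sum_x w x * q.[#|A :\: x|%:R] = 0.
Proof.
case: s => [|s] hw leqs.
  move: leqs; rewrite leqn0 size_poly_eq0 => /eqP->.
  by rewrite big1 // => x _; rewrite horner0 mulr0.
exact: low_degree_orth hw (low_degree_horner (low_degree_card_setD A) leqs).
Qed.

End LowDegree.

Lemma imset_permK (T : finType) (g : {perm T}) :
  cancel (fun x : {set T} => g @: x) (fun x => (g^-1)%g @: x).
Proof. by move=> x; rewrite -imset_comp (eq_imset _ (permK g)) imset_id. Qed.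

Lemma imset_permKV (T : finType) (g : {perm T}) :
  cancel (fun x : {set T} => (g^-1)%g @: x) (fun x => g @: x).
Proof. by move=> x; rewrite -imset_comp (eq_imset _ (permKV g)) imset_id. Qed.

Lemma subset_imset_perm (T : finType) (g : {perm T}) (A B : {set T}) :
  (A \subset g @: B) = ((g^-1)%g @: A \subset B).
Proof.
apply/idP/idP => [/(imsetS (g^-1)%g)|/(imsetS g)]; first by rewrite imset_permK.
by rewrite imset_permKV.
Qed.

Lemma rho_sum (C : numClosedFieldType) n (g : {perm 'I_n}) (I : finType) (F : I -> fn C n) :
  rho g (\sum_i F i) = \sum_i rho g (F i).
Proof. by apply/ffunP=> x; rewrite ffunE !sum_ffunE; apply: eq_bigr => i _; rewrite ffunE. Qed.

Lemma rhoZ (C : numClosedFieldType) n (g : {perm 'I_n}) (a : C) (u : fn C n) :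
  rho g (a *: u) = a *: rho g u.
Proof. by apply/ffunP=> x; rewrite !ffunE. Qed.

Lemma rho_delta (C : numClosedFieldType) n (g : {perm 'I_n}) (x : {set 'I_n}) :
  rho g (delta C x) = delta C (g @: x).
Proof.
apply/ffunP=> y; rewrite !ffunE; congr ((nat_of_bool _)%:R).
by apply/eqP/eqP => [<-|->]; rewrite ?imset_permKV ?imset_permK.
Qed.

Section Polytabloids.
Variables (C : numClosedFieldType) (n s : nat).
Implicit Types (e : {ffun 'I_s * bool -> 'I_n}) (x B : {set 'I_n}).

Lemma exists_column_avoiding e B : injective e -> (#|B| < s)%N ->
  exists i : 'I_s, (e (i, true) \notin B) && (e (i, false) \notin B).
Proof.
move=> inj_e ltBs; apply/existsP; apply: contraTT ltBs => /existsPn hB.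
pose f i := if e (i, true) \in B then e (i, true) else e (i, false).
have inj_f : injective f.
  by move=> i j; rewrite /f; do 2 case: ifP => _; move/inj_e => [->].
rewrite -leqNgt -[s in (s <= _)%N]card_ord -(card_imset _ inj_f) subset_leq_card //.
apply/subsetP => _ /imsetP[i _ ->]; rewrite /f; case: ifP => // /negbT nB.
by move: (hB i); rewrite nB negbK.
Qed.

(* Column transpositions reverse the sign of F, and one of them fixes B. *)
Lemma antisym_low_orthogonal e (F : {set 'I_n} -> C) : injective e ->
  (forall (i : 'I_s) x, F (tperm (e (i, true)) (e (i, false)) @: x) = - F x) ->
  low_orthogonal s F.
Proof.
move=> inj_e hF B ltBs; have [i /andP[hi1 hi2]] := exists_column_avoiding inj_e ltBs.
pose t := tperm (e (i, true)) (e (i, false)).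
have tB : (t^-1)%g @: B = B.
  rewrite tpermV -[RHS]imset_id; apply/eq_in_imset => y yB.
  by rewrite tpermD //; [apply: contraNneq hi1 | apply: contraNneq hi2] => ->.
set S := \sum_x _; have : S = - S.
  rewrite {1}/S (reindex_inj (can_inj (imset_permK t))) -sumrN /=.
  by apply: eq_bigr => x _; rewrite [F _]hF subset_imset_perm tB mulNr.
by move/eqP; rewrite -addr_eq0 -mulr2n mulrn_eq0 /= => /eqP.
Qed.

Definition tabloid e (eps : {ffun 'I_s -> bool}) : {set 'I_n} := [set e (k, eps k) | k : 'I_s].

Definition flip_col (i : 'I_s) (eps : {ffun 'I_s -> bool}) : {ffun 'I_s -> bool} :=
  [ffun k => (k == i) (+) eps k].

Lemma flip_colK i : involutive (flip_col i).
Proof. by move=> eps; apply/ffunP=> k; rewrite !ffunE addbA addbb. Qed.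

Lemma sign_flip_col i eps :
  (-1) ^+ #|[set k | flip_col i eps k]| = - (-1) ^+ #|[set k | eps k]| :> C.
Proof.
case epsi: (eps i).
- have -> : [set k | flip_col i eps k] = [set k | eps k] :\ i.
    by apply/setP=> k; rewrite !inE !ffunE; case: eqP => [->|]; rewrite ?epsi.
  by rewrite [#|[set k | eps k]|](cardsD1 i) inE epsi exprS mulN1r opprK.
- have -> : [set k | flip_col i eps k] = i |: [set k | eps k].
    by apply/setP=> k; rewrite !inE !ffunE; case: eqP => [->|]; rewrite ?epsi.
  by rewrite cardsU1 inE epsi exprS mulN1r.
Qed.

Lemma tperm_tabloid e i eps : injective e ->
  tperm (e (i, true)) (e (i, false)) @: tabloid e eps = tabloid e (flip_col i eps).
Proof.
move=> inj_e; rewrite -imset_comp; apply: eq_imset => k /=; rewrite ffunE.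
have [->|nki] := eqVneq k i; first by case: (eps i); rewrite ?tpermL ?tpermR.
by rewrite tpermD // (inj_eq inj_e) xpair_eqE negb_and (eq_sym i) nki.
Qed.

Lemma tabloid_inj e : injective e -> injective (tabloid e).
Proof.
move=> inj_e eps eps' eq_eps; apply/ffunP=> k.
have : e (k, eps k) \in tabloid e eps' by rewrite -eq_eps; apply: imset_f.
by case/imsetP=> k' _ /inj_e [-> ->].
Qed.

Lemma rho_polytab_tperm e i : injective e ->
  rho (tperm (e (i, true)) (e (i, false))) (polytab C e) = - polytab C e.
Proof.
move=> inj_e; rewrite /polytab rho_sum -sumrN (reindex_inj (inv_inj (flip_colK i))) /=.
apply: eq_bigr => eps _; rewrite rhoZ rho_delta.
by rewrite [_ @: _](tperm_tabloid _ _ inj_e) flip_colK sign_flip_col scaleNr.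
Qed.

Lemma polytab_neq0 e : injective e -> polytab C e != 0.
Proof.
move=> inj_e; apply/eqP => /(congr1 (fun u : fn C n => u (tabloid e [ffun => false]))) /eqP.
rewrite ffunE sum_ffunE (bigD1 [ffun => false]) //= big1 => [|eps neps].
  by rewrite !ffunE eqxx addr0 scaler_eq0 signr_eq0 oner_eq0.
rewrite !ffunE (_ : (_ == _) = false) ?scaler0 //.
by apply: contraNF neps => /eqP/tabloid_inj ->.
Qed.

Lemma Specht_polytab e : injective e -> Specht s (polytab C e).
Proof.
move=> inj_e; exists [ffun e' => (e' == e)%:R].
rewrite (bigD1 e) /=; last exact/injectiveP.
rewrite ffunE eqxx scale1r big1 ?addr0 // => e' /andP[_ ne'e].
by rewrite ffunE (negbTE ne'e) scale0r.
Qed.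

Lemma Specht0 : Specht (C := C) (n := n) s 0.
Proof. by exists 0; rewrite big1 // => e _; rewrite ffunE scale0r. Qed.

Lemma exists_injective_tableau : (s + s <= n)%N -> exists e, injective e.
Proof.
move=> le2sn; have le : (#|{: 'I_s * bool}| <= n)%N.
  by rewrite card_prod card_ord card_bool muln2 -addnn.
exists [ffun p => widen_ord le (enum_rank p)] => p q; rewrite !ffunE.
by move/(congr1 val) => /= /val_inj; apply: (can_inj enum_rankK).
Qed.

End Polytabloids.

Section Components.
Variables (C : numClosedFieldType) (n : nat).

Lemma low_orthogonal_rho s (g : {perm 'I_n}) (u : fn C n) :
  low_orthogonal s (fun x => u x) -> low_orthogonal s (fun x => rho g u x).
Proof.
move=> hu B ltBs; rewrite (reindex_inj (can_inj (imset_permK g))) /=.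
under eq_bigr => x _ do rewrite ffunE imset_permK subset_imset_perm.
by apply: hu; rewrite card_imset //; apply: perm_inj.
Qed.

Lemma IsComp_low_orthogonal r s (W : fn C n -> Prop) w : (s + s <= n)%N ->
  IsComp r s W -> W w -> low_orthogonal s (fun x => w x).
Proof.
move=> le2sn [[[W0 WD] WG _ Wirr] _ [f [f_lin fVW _ f_inj f_rho]]].
pose U w := W w /\ low_orthogonal s (fun x => w x).
have U_sub : subspace U.
  split=> [|a u v [Wu hu] [Wv hv]].
    by split=> // B _; rewrite big1 // => x _; rewrite ffunE mul0r.
  split=> [|B ltBs]; first exact: WD.
  under eq_bigr => x _ do rewrite !ffunE mulrDl -mulrA.
  by rewrite big_split -mulr_sumr /= hu // hv // mulr0 addr0.
have U_inv : Ginvariant U by move=> g u [Wu hu]; split; [exact: WG | exact: low_orthogonal_rho].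
have f0 : f 0 = 0 by have := f_lin (-1) 0 0; rewrite scaler0 addr0 scaleN1r addNr.
have fN u : f (- u) = - f u by rewrite -scaleN1r -[_ *: u]addr0 f_lin f0 addr0 scaleN1r.
have [e inj_e] := exists_injective_tableau le2sn.
have Se := Specht_polytab C inj_e.
have Ufe : U (f (polytab C e)).
  split; first exact: fVW.
  apply: (antisym_low_orthogonal inj_e) => i x.
  have := f_rho (tperm (e (i, true)) (e (i, false))) _ Se.
  rewrite rho_polytab_tperm // fN => /(congr1 (fun u : fn C n => u x)).
  by rewrite !ffunE tpermV => <-.
have [U0|UW] := Wirr U U_sub U_inv (fun _ => @proj1 _ _); last by move=> /UW[].
have := U0 _ Ufe; rewrite -f0 => /(f_inj _ _ Se (Specht0 C n s)) /eqP.
by rewrite (negbTE (polytab_neq0 C inj_e)).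
Qed.

End Components.

Lemma conjC_horner_nat (C : numClosedFieldType) (q : {poly C}) (m : nat) :
  (q.[m%:R])^* = (map_poly Num.conj q).[m%:R].
Proof. by rewrite -{2}(conjC_nat C m) horner_map. Qed.

Definition row_orthogonal (C : numClosedFieldType) n r1 s (x2 : {set 'I_n}) (p : {poly C}) :=
  forall q : {poly C}, (size q <= s)%N ->
    \sum_(x1 : {set 'I_n} | #|x1| == r1) p.[#|x2 :\: x1|%:R] * q.[#|x2 :\: x1|%:R] = 0.

Lemma IsLambda_row_orthogonal (C : numClosedFieldType) n r1 r2 s (p : {poly C}) (x2 : {set 'I_n}) :
  (s + s <= n)%N -> IsLambda n r1 r2 s p -> #|x2| = r2 -> row_orthogonal r1 s x2 p.
Proof.
move=> le2sn [W1 [W2 [L [W1comp [_ [_ [_ [L_orth [L_kernel _]]]]]]]]] x2r2 q leqs.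
pose u : fn C n := [ffun x => q.[#|x2 :\: x|%:R]].
have Lu0 : L u = 0.
  apply: L_orth => w /(IsComp_low_orthogonal le2sn W1comp) w_orth.
  rewrite /inner; under eq_bigr => x _ do rewrite ffunE conjC_horner_nat.
  by apply: low_orthogonal_horner_card_setD w_orth _; rewrite size_map_poly.
have := L_kernel u x2 x2r2; rewrite Lu0 ffunE => Lux2.
by rewrite [RHS]Lux2; apply: eq_bigr => x _; rewrite ffunE.
Qed.

Section SubsetCounting.
Variable T : finType.
Implicit Types (A U x : {set T}).

Lemma card_subsets_meet U A m i : A \subset U -> (i <= m)%N ->
  #|[set x : {set T} | [&& x \subset U, #|x| == m & #|x :&: A| == i]]| =
  ('C(#|A|, i) * 'C(#|U :\: A|, m - i))%N.
Proof.
move=> AU le_im.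
pose D := setX [set a : {set T} | a \subset A & #|a| == i]
               [set o : {set T} | o \subset U :\: A & #|o| == (m - i)%N].
have splitK : {in D, cancel (fun p => p.1 :|: p.2) (fun x => (x :&: A, x :\: A))}.
  move=> [a o]; rewrite !inE /= => /andP[/andP[/subsetP aA _] /andP[/subsetP oUA _]].
  congr pair; apply/setP => z; rewrite !inE;
    move: (aA z) (oUA z); rewrite !inE;
    case: (z \in a); case: (z \in o); case: (z \in A); case: (z \in U) => //= h1 h2;
    solve [by have := h1 isT | by have := h2 isT].
rewrite -(cards_draws A i) -cards_draws -cardsX -(card_in_imset (can_in_inj splitK)).
apply: eq_card => x; rewrite inE; apply/and3P/imsetP => [[xU /eqP xm /eqP xAi]|].
  exists (x :&: A, x :\: A); last by rewrite /= setID.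
  rewrite !inE subsetIr setSD //= xAi eqxx /=.
  by rewrite -(eqn_add2l i) subnKC // -xAi cardsID xm.
move=> [[a o] aoD ->]; have := splitK _ aoD; case=> aoA aoA'.
move: aoD; rewrite !inE /= => /andP[/andP[aA /eqP ai] /andP[oUA /eqP om]].
split; [|apply/eqP|by rewrite aoA ai].
  by rewrite subUset (subset_trans aA AU) (subset_trans oUA (subsetDl _ _)).
by rewrite -(cardsID A) aoA aoA' ai om subnKC.
Qed.

Lemma sum_subsets_meet (R : nmodType) U A m (F : nat -> R) : A \subset U ->
  \sum_(x : {set T} | (x \subset U) && (#|x| == m)) F #|x :&: A| =
  \sum_(i < #|A|.+1) F i *+ ('C(#|A|, i) * 'C(#|U :\: A|, m - i) * (i <= m)).
Proof.
move=> AU; rewrite big_mkcond /=.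
pose P i (x : {set T}) := [&& x \subset U, #|x| == m & #|x :&: A| == i].
transitivity (\sum_x \sum_(i < #|A|.+1) (if P i x then F i else 0)).
  apply: eq_bigr => x _.
  have ltxA : (#|x :&: A| < #|A|.+1)%N by rewrite ltnS subset_leq_card ?subsetIr.
  rewrite (bigD1 (Ordinal ltxA)) //= /P eqxx andbT big1 ?addr0 => [|i /eqP ne].
    by case: (_ && _).
  by case: and3P => // [[_ _ /eqP xAi]]; case: ne; apply: val_inj.
rewrite exchange_big; apply: eq_bigr => i _; rewrite -big_mkcond sumr_const.
have [le_im|lt_mi] := leqP i m.
  by rewrite muln1 -(card_subsets_meet AU le_im); congr (_ *+ _); apply: eq_card => x; rewrite inE.
rewrite muln0 mulr0n [X in F i *+ X]eq_card0 // => x; rewrite /P !inE.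
apply/and3P => [[_ /eqP xm /eqP xAi]].
by move: (subset_leq_card (subsetIl x A)); rewrite xAi xm leqNgt lt_mi.
Qed.

End SubsetCounting.

Lemma ffact_swap (N M b j : nat) : (b <= N)%N -> (j <= N)%N ->
  ((N + M - b) ^_ (N - j) * (M + j) ^_ j = (N + M - b) ^_ (N - b) * (M + j) ^_ b)%N.
Proof.
move=> le_bN le_jN; set Q := (N + M - b)%N.
have [ltMjb|le_bMj] := ltnP (M + j) b.
  by rewrite (ffact_small ltMjb) muln0 ffact_small ?mul0n // /Q; lia.
apply/eqP; rewrite -(eqn_pmul2r (fact_gt0 (M + j - b))) -(eqn_pmul2r (fact_gt0 M)); apply/eqP.
have ffactK k m m' : (k <= m)%N -> (m - k)%N = m' -> (m ^_ k * m'`! = m`!)%N.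
  by move=> le_km <-; rewrite ffact_fact.
have e1 : (Q ^_ (N - j) * (M + j - b)`! = Q`!)%N by apply: ffactK; rewrite /Q; lia.
have e2 : ((M + j) ^_ j * M`! = (M + j)`!)%N by apply: ffactK; lia.
have e3 : (Q ^_ (N - b) * M`! = Q`!)%N by apply: ffactK; rewrite /Q; lia.
transitivity (Q`! * (M + j)`!)%N; first by rewrite -e1 -e2; ring.
by rewrite -e3 -(ffactK b (M + j) (M + j - b)%N) //; ring.
Qed.

Lemma bin_ffact_swap (N M b i : nat) : (b <= N)%N -> (i <= N)%N ->
  ('C(N + M - b, N - i) * (M + i) ^_ i * N`! =
   (N + M - b) ^_ (N - b) * b`! * 'C(M + i, b) * N ^_ i)%N.
Proof.
move=> le_bN le_iN; rewrite -(ffact_fact le_iN).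
transitivity ('C(N + M - b, N - i) * (N - i)`! * (M + i) ^_ i * N ^_ i)%N; first by ring.
rewrite bin_ffact ffact_swap // -(bin_ffact (M + i) b); ring.
Qed.

Section Lam0.
Variable C : numClosedFieldType.

Lemma rising_natE (a j : nat) : rising (a%:R + 1 : C) j = ((a + j) ^_ j)%:R.
Proof.
elim: j => [|j IH]; first by rewrite /rising big_ord0 ffactn0.
rewrite /rising big_ord_recr /= -/(rising _ _) IH addnS ffactSS natrM mulrC.
by congr (_ * _); rewrite -addn1 natrD addrAC natrD.
Qed.

Lemma falling_natE (N j : nat) : falling (N%:R : C) j = (N ^_ j)%:R.
Proof.
elim: j => [|j IH]; first by rewrite /falling big_ord0 ffactn0.
rewrite /falling big_ord_recr /= -/(falling _ _) IH ffactnSr natrM.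
by have [le_jN|ltNj] := leqP j N; [rewrite natrB | rewrite ffact_small // !mul0r].
Qed.

Lemma cbinom_natE (t j : nat) : cbinom (t%:R : C) j = ('C(t, j))%:R.
Proof. by rewrite /cbinom falling_natE -bin_ffact natrM mulfK // pnatr_eq0 -lt0n fact_gt0. Qed.

Lemma lam0_0 n r1 s : lam0 C n r1 s 0 = 1.
Proof. by rewrite /lam0 /rising /falling !big_ord0 expr0 divr1 mulr1. Qed.

Lemma alternating_bin_sumS (K : nat) (g : nat -> C) :
  \sum_(j < K.+2) (-1) ^+ j * 'C(K.+1, j)%:R * g j =
  \sum_(j < K.+1) (-1) ^+ j * 'C(K, j)%:R * (g j - g j.+1).
Proof.
rewrite big_ord_recl /=.
under eq_bigr => j _ do rewrite /bump /= binS natrD mulrDr mulrDl.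
rewrite big_split /= addrA.
have -> : (-1) ^+ 0 * 'C(K.+1, 0)%:R * g 0%N +
     \sum_(i < K.+1) (-1) ^+ (1 + i) * 'C(K, i.+1)%:R * g (1 + i)%N =
     \sum_(i < K.+2) (-1) ^+ i * 'C(K, i)%:R * g i.
  by rewrite [in RHS]big_ord_recl /= !bin0.
rewrite big_ord_recr /= bin_small // mulr0 mul0r addr0 -big_split /=.
by apply: eq_bigr => i _; rewrite add1n exprS mulN1r !mulNr mulrBr.
Qed.

(* The K-th finite difference of a polynomial of degree b < K vanishes. *)
Lemma alternating_bin_sum_eq0 (K M b : nat) : (b < K)%N ->
  \sum_(j < K.+1) (-1) ^+ j * 'C(K, j)%:R * 'C(M + j, b)%:R = 0 :> C.
Proof.
elim: K b => [|K IH] b // ltbK; rewrite (alternating_bin_sumS K (fun j => 'C(M + j, b)%:R)).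
case: b ltbK => [|b] ltbK.
  by rewrite big1 // => i _; rewrite !bin0 subrr mulr0.
rewrite -[RHS]oppr0 -[in RHS](IH b) // -sumrN; apply: eq_bigr => i _.
by rewrite addnS binS natrD opprD addrA subrr sub0r mulrN.
Qed.

(* Up to a factor independent of i, the i-th term is
   (-1)^i 'C(K, i) 'C(r1 - s + i, b), a polynomial of degree b < K in i. *)
Lemma sum_bin_lam0_eq0 n r1 s K Q b :
  (s <= r1)%N -> (s <= n - r1)%N -> (K <= s)%N -> (b < K)%N -> (Q + s + b = n)%N ->
  \sum_(i < K.+1) lam0 C n r1 s i *+ ('C(K, i) * 'C(Q, n - r1 - i) * (i <= n - r1)) = 0.
Proof.
move=> le_sr1 le_sr1' le_Ks lt_bK QsbE.
set N := (n - r1)%N; set M := (r1 - s)%N.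
have -> : Q = (N + M - b)%N by rewrite /N /M; lia.
have le_bN : (b <= N)%N by rewrite /N; lia.
pose kappa : C := (((N + M - b) ^_ (N - b) * b`!)%:R / (N`!)%:R).
rewrite (eq_bigr (fun i : 'I_K.+1 => kappa * ((-1) ^+ i * 'C(K, i)%:R * 'C(M + i, b)%:R))).
  by rewrite -mulr_sumr alternating_bin_sum_eq0 ?mulr0.
move=> i _; have le_iN : (i <= N)%N by have := ltn_ord i; rewrite /N; lia.
rewrite le_iN muln1 /lam0 falling_natE -natrB // rising_natE /kappa.
have ffact_neq0 : (N ^_ i)%:R != 0 :> C by rewrite pnatr_eq0 -lt0n ffact_gt0.
have fact_neq0 : (N`!)%:R != 0 :> C by rewrite pnatr_eq0 -lt0n fact_gt0.
rewrite -mulr_natr [LHS](_ : _ = (-1) ^+ i * 'C(K, i)%:R *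
  ('C(N + M - b, N - i) * (M + i) ^_ i)%:R / (N ^_ i)%:R); last by rewrite !natrM; field.
rewrite [RHS](_ : _ = (-1) ^+ i * 'C(K, i)%:R *
  ((N + M - b) ^_ (N - b) * b`! * 'C(M + i, b))%:R / (N`!)%:R); last by rewrite !natrM; field.
apply/eqP; rewrite eqr_div //; apply/eqP.
by rewrite -!mulrA -!natrM bin_ffact_swap.
Qed.

(* Complementing x1, the sum runs over the (n - r1)-subsets z of ~: B, graded
   by #|z :&: (y :\: B)|. *)
Lemma lam0_row_low_orthogonal n r1 s (y : {set 'I_n}) :
  (s <= r1)%N -> (s <= n - r1)%N -> #|y| = s ->
  low_orthogonal s (fun x => if #|x| == r1 then lam0 C n r1 s #|y :\: x| else 0).
Proof.
move=> le_sr1 le_sr1' ys B ltBs.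
rewrite (eq_bigr (fun x : {set 'I_n} =>
    if (#|x| == r1) && (B \subset x) then lam0 C n r1 s #|y :\: x| else 0)); last first.
  by move=> x _; case: (_ == _); case: (_ \subset _); rewrite /= ?mulr1 ?mulr0 ?mul0r.
rewrite -big_mkcond /= (reindex_inj (@setC_inj _)) /=.
set A := y :\: B.
rewrite (eq_bigl (fun z : {set 'I_n} => (z \subset ~: B) && (#|z| == n - r1)%N)) => [|z];
  last first.
  rewrite [B \subset _]subsetC [#|~: z|]cardsCs card_ord setCK andbC.
  case: (z \subset ~: B) => //=.
  by have := max_card (mem z); rewrite card_ord => ?; apply/eqP/eqP; lia.
rewrite (eq_bigr (fun z : {set 'I_n} => lam0 C n r1 s #|z :&: A|)) => [|z /andP[/subsetP zB _]];
  last first.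
  suff -> : y :\: ~: z = z :&: A by [].
  apply/setP => u; rewrite !inE negbK.
  case uz: (u \in z); rewrite /= ?andbF //.
  by move: (zB u uz); rewrite inE => ->.
rewrite sum_subsets_meet; last by apply/subsetP=> u; rewrite !inE => /andP[].
have cA : (#|A| + #|y :&: B| = s)%N by rewrite -ys -(cardsID B y) addnC.
have cB := cardsID y B; have cU := cardsU B y; have cI : #|B :&: y| = #|y :&: B| by rewrite setIC.
have cQ : #|~: B :\: A| = (n - #|B :|: y|)%N.
  suff -> : ~: B :\: A = ~: (B :|: y) by rewrite [LHS]cardsCs setCK card_ord.
  by apply/setP=> u; rewrite !inE; case: (u \in B); case: (u \in y).
have := max_card (mem (B :|: y)); rewrite card_ord => cBy.
apply: (@sum_bin_lam0_eq0 n r1 s #|A| #|~: B :\: A| #|B :\: y|) => //; lia.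
Qed.

End Lam0.

Lemma sum_ord_widen_eq0 (R : nmodType) a b (F : nat -> R) :
  (a <= b)%N -> (forall i, (a <= i)%N -> F i = 0) -> \sum_(i < a) F i = \sum_(i < b) F i.
Proof.
move=> le_ab F0; rewrite (big_ord_widen b F le_ab) big_mkcond; apply: eq_bigr => i _.
by case: ltnP => // /F0.
Qed.

Section LambdaPoly.
Variable C : numClosedFieldType.

Definition falling_poly (q : {poly C}) j : {poly C} := \prod_(i < j) (q - (i%:R)%:P).

Definition binom_poly (q : {poly C}) j : {poly C} := (j`!)%:R^-1 *: falling_poly q j.

Definition lambda_poly n r1 r2 s : {poly C} := ('C(r2, s))%:R^-1 *:
  \sum_(j < s.+1) lam0 C n r1 s j *: (binom_poly 'X j * binom_poly ((r2%:R)%:P - 'X) (s - j)).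

Lemma horner_binom_poly (q : {poly C}) j t : (binom_poly q j).[t] = cbinom q.[t] j.
Proof.
rewrite hornerZ /falling_poly horner_prod /cbinom /falling [LHS]mulrC.
by congr (_ * _); apply: eq_bigr => i _; rewrite !hornerE.
Qed.

Lemma horner_lambda_poly n r1 r2 s t : (lambda_poly n r1 r2 s).[t] = ('C(r2, s))%:R^-1 *
  \sum_(j < s.+1) cbinom t j * cbinom (r2%:R - t) (s - j) * lam0 C n r1 s j.
Proof.
rewrite hornerZ horner_sum; congr (_ * _); apply: eq_bigr => j _.
by rewrite hornerZ hornerM !horner_binom_poly hornerD hornerN hornerC hornerX mulrC.
Qed.

Lemma size_binom_poly (q : {poly C}) j : (size q <= 2)%N -> (size (binom_poly q j) <= j.+1)%N.
Proof.
move=> size_q; apply: leq_trans (size_scale_leq _ _) _; elim: j => [|j IH].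
  by rewrite /falling_poly big_ord0 size_poly1.
rewrite /falling_poly big_ord_recr /= -/(falling_poly q j); apply: leq_trans (size_mul_leq _ _) _.
have : (size (q - (j%:R)%:P)%R <= 2)%N.
  rewrite (leq_trans (size_polyD _ _)) // geq_max size_q size_polyN.
  exact: leq_trans (size_polyC_leq1 _) _.
by lia.
Qed.

Lemma size_lambda_poly n r1 r2 s : (size (lambda_poly n r1 r2 s) <= s.+1)%N.
Proof.
apply: leq_trans (size_scale_leq _ _) _; apply: (big_ind (fun q : {poly C} => size q <= s.+1)%N).
- by rewrite size_poly0.
- by move=> q1 q2 h1 h2; apply: leq_trans (size_polyD _ _) _; rewrite geq_max h1 h2.
move=> j _; apply: leq_trans (size_scale_leq _ _) _; apply: leq_trans (size_mul_leq _ _) _.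
have le_js : (j <= s)%N by rewrite -ltnS.
have h1 := size_binom_poly j (eq_leq (size_polyX C)).
have h2 : (size (binom_poly ((r2%:R)%:P - 'X)%R (s - j)) <= (s - j).+1)%N.
  apply: size_binom_poly.
  rewrite (leq_trans (size_polyD _ _)) // size_polyN size_polyX geq_max andbT.
  exact: leq_trans (size_polyC_leq1 _) _.
by move: (leq_add h1 h2); lia.
Qed.

Lemma lambda_poly0 n r1 r2 s : (s <= r2)%N -> (lambda_poly n r1 r2 s).[0] = 1.
Proof.
have cbinom0 j : cbinom (0 : C) j = ('C(0, j))%:R := cbinom_natE C 0 j.
move=> le_sr2; rewrite horner_lambda_poly big_ord_recl big1 ?addr0 => [|j _] /=.
  rewrite subr0 cbinom0 cbinom_natE bin0 subn0 lam0_0 !mul1r mulr1 mulVf //.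
  by rewrite pnatr_eq0 -lt0n bin_gt0.
by rewrite cbinom0 bin0n !mul0r.
Qed.

Lemma lambda_poly_row n r1 r2 s (x2 x1 : {set 'I_n}) : #|x2| = r2 ->
  (lambda_poly n r1 r2 s).[#|x2 :\: x1|%:R] = ('C(r2, s))%:R^-1 *
    \sum_(y : {set 'I_n} | (y \subset x2) && (#|y| == s)) lam0 C n r1 s #|y :\: x1|.
Proof.
move=> x2r2; rewrite horner_lambda_poly; congr (_ * _).
set t := #|x2 :\: x1|; have le_tr2 : (t <= r2)%N by rewrite -x2r2 subset_leq_card ?subsetDl.
rewrite (eq_bigr (fun y : {set 'I_n} => lam0 C n r1 s #|y :&: (x2 :\: x1)|)) => [|y /andP[yx2 _]];
  last first.
  suff -> : y :&: (x2 :\: x1) = y :\: x1 by [].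
  by apply/setP => u; rewrite !inE; case uy: (u \in y); rewrite ?andbF //= (subsetP yx2 u uy) andbT.
rewrite sum_subsets_meet ?subsetDl // (_ : #|x2 :\: (x2 :\: x1)| = r2 - t)%N; last first.
  by rewrite setDDr setDv set0U -x2r2 -(cardsID x1 x2) addnK.
pose F i := lam0 C n r1 s i *+ ('C(t, i) * 'C(r2 - t, s - i) * (i <= s)).
transitivity (\sum_(i < s.+1) F i).
  apply: eq_bigr => i _; rewrite -natrB // !cbinom_natE /F -ltnS ltn_ord muln1.
  by rewrite -natrM mulr_natl.
rewrite (@sum_ord_widen_eq0 _ _ (s + t).+1) ?ltnS ?leq_addr // => [|i]; last first.
  by move=> lt_si; rewrite /F leqNgt lt_si muln0.
rewrite [RHS](@sum_ord_widen_eq0 _ _ (s + t).+1 F) ?ltnS ?leq_addl // => i lt_ti.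
by rewrite /F bin_small // !mul0n.
Qed.

Lemma lambda_poly_diag n r1 s j : (j <= s)%N -> (lambda_poly n r1 s s).[j%:R] = lam0 C n r1 s j.
Proof.
move=> le_js; rewrite horner_lambda_poly binn invr1 mul1r -natrB //.
rewrite (bigD1 (Ordinal (le_js : j < s.+1)%N)) //= !cbinom_natE !binn !mul1r big1 ?addr0 //.
move=> i /eqP ne_ij; rewrite !cbinom_natE.
have [lt_ij|lt_ji|eq_ij] := ltngtP i j; last by case: ne_ij; apply: val_inj.
  by rewrite (@bin_small (s - j)) ?mulr0 ?mul0r //; lia.
by rewrite bin_small // !mul0r.
Qed.

End LambdaPoly.

Lemma row_orthogonal_lambda_poly (C : numClosedFieldType) n r1 r2 s (x2 : {set 'I_n}) :
  (s <= r1)%N -> (s <= n - r1)%N -> #|x2| = r2 -> row_orthogonal r1 s x2 (lambda_poly C n r1 r2 s).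
Proof.
move=> le_sr1 le_sr1' x2r2 q le_qs.
under eq_bigr => x1 _ do rewrite lambda_poly_row // -mulrA mulr_suml.
rewrite -mulr_sumr exchange_big /= big1 ?mulr0 // => y /andP[_ /eqP ys].
have row_orth :=
  low_orthogonal_horner_card_setD x2 (lam0_row_low_orthogonal C le_sr1 le_sr1' ys) le_qs.
by rewrite big_mkcond -[RHS]row_orth; apply: eq_bigr => x _; case: ifP; rewrite ?mul0r.
Qed.

Lemma exists_subset_card (T : finType) (A : {set T}) k :
  (k <= #|A|)%N -> exists2 B : {set T}, B \subset A & #|B| = k.
Proof.
move=> le_kA; have : (0 < #|[set B : {set T} | B \subset A & #|B| == k]|)%N.
  by rewrite cards_draws bin_gt0.
by case/card_gt0P => B; rewrite inE => /andP[BA /eqP Bk]; exists B.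
Qed.

(* x1 keeps #|x2| - t points of x2 and takes the others outside x2. *)
Lemma exists_card_setD (T : finType) (x2 : {set T}) r1 t :
  (#|x2| - r1 <= t <= #|x2|)%N -> (t + r1 <= #|T|)%N ->
  exists2 x1 : {set T}, #|x1| = r1 & #|x2 :\: x1| = t.
Proof.
move=> /andP[le_x2t le_tx2] le_tr1.
have [a ax2 a_card] := exists_subset_card (leq_subr t #|x2|).
have [o ox2 o_card] : exists2 o : {set T}, o \subset ~: x2 & #|o| = (r1 - (#|x2| - t))%N.
  by apply: exists_subset_card; rewrite cardsCs; lia.
have ao0 : a :&: o = set0.
  apply/setP => z; rewrite !inE; apply/negbTE/andP => [[/(subsetP ax2) za /(subsetP ox2)]].
  by rewrite inE za.
have x2o : x2 :\: o = x2 by apply/setDidPl; rewrite disjoints_subset -setCS setCK.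
exists (a :|: o); first by rewrite cardsU ao0 cards0 subn0 a_card o_card; lia.
rewrite setDUr x2o (setIidPl (subsetDl _ _)) cardsD (setIidPr ax2) a_card; lia.
Qed.

Section Uniqueness.
Variables (C : numClosedFieldType) (n r1 r2 s : nat).
Hypothesis le_sN : (s <= Nmin n r1 r2)%N.

(* Taking q = conj h, h vanishes at each value #|x2 :\: x1|; these are at least s. *)
Lemma row_orthogonal_eq0 (x2 : {set 'I_n}) (h : {poly C}) :
  #|x2| = r2 -> (size h <= s)%N -> row_orthogonal r1 s x2 h -> h = 0.
Proof.
move=> x2r2 le_hs h_orth.
have h_root (x1 : {set 'I_n}) : #|x1| == r1 -> root h #|x2 :\: x1|%:R.
  have := h_orth (map_poly Num.conj h); rewrite size_map_poly => /(_ le_hs).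
  under eq_bigr => x _ do rewrite -conjC_horner_nat -normCK.
  move/psumr_eq0P => /(_ (fun x _ => exprn_ge0 2 (normr_ge0 _))) /(_ x1) h0 /h0 /eqP.
  by rewrite expf_eq0 normr_eq0.
apply/eqP; apply: contraT => h_neq0.
have := max_poly_roots h_neq0 (rs := [seq ((r2 - r1) + k)%:R : C | k <- iota 0 s]).
rewrite size_map size_iota ltnNge le_hs; apply.
  apply/allP => _ /mapP[k + ->]; rewrite mem_iota add0n => lt_ks.
  have [x1 /eqP x1r1 <-] : exists2 x1 : {set 'I_n}, #|x1| = r1 & #|x2 :\: x1| = (r2 - r1 + k)%N.
    by apply: exists_card_setD; move: le_sN x2r2; rewrite ?card_ord /Nmin; lia.
  exact: h_root.
by rewrite map_inj_uniq ?iota_uniq // => k1 k2 /eqP; rewrite eqr_nat eqn_add2l => /eqP.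
Qed.

Lemma IsLambda_lambda_poly (p : {poly C}) :
  (r2 <= n)%N -> IsLambda n r1 r2 s p -> p = lambda_poly C n r1 r2 s.
Proof.
move=> le_r2n p_lambda; have [? [? [? [_ [_ [_ [_ [_ [_ [size_p p0]]]]]]]]]] := p_lambda.
have [le_sr1 le_sr1' le_sr2 le_2sn] : [/\ s <= r1, s <= n - r1, s <= r2 & s + s <= n]%N.
  by move: le_sN; rewrite /Nmin => ?; split; lia.
have [x2 _ x2r2] : exists2 x2 : {set 'I_n}, x2 \subset setT & #|x2| = r2.
  by apply: exists_subset_card; rewrite cardsT card_ord.
set P := lambda_poly C n r1 r2 s; pose c := P`_s / p`_s.
have ps_neq0 : p`_s != 0.
  by rewrite -[s in p`_s]/(s.+1.-1) -size_p -lead_coefE lead_coef_eq0 -size_poly_gt0 size_p.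
have size_h : (size (P - c *: p)%R <= s)%N.
  apply/leq_sizeP => j le_sj; rewrite coefB (coefZ c).
  have [lt_sj|lt_js|<-] := ltngtP s j; last by rewrite /c divfK // subrr.
    by rewrite !nth_default ?size_p ?mulr0 ?subrr // (leq_trans (size_lambda_poly _ _ _ _ _)).
  by move: le_sj; rewrite leqNgt lt_js.
have h0 : P - c *: p = 0.
  apply: (row_orthogonal_eq0 x2r2 size_h) => q le_qs.
  under eq_bigr => x1 _ do rewrite hornerD hornerN (hornerZ c) mulrDl mulNr -mulrA.
  rewrite big_split sumrN -mulr_sumr /= row_orthogonal_lambda_poly //.
  by rewrite (IsLambda_row_orthogonal le_2sn p_lambda x2r2) // mulr0 subr0.
have c1 : c = 1.
  move/eqP: h0; rewrite subr_eq0 => /eqP/(congr1 (horner^~ 0)).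
  by rewrite (hornerZ c) p0 lambda_poly0 // mulr1.
by move/eqP: h0; rewrite c1 scale1r subr_eq0 => /eqP.
Qed.

End Uniqueness.

Theorem lemma1 (C : numClosedFieldType) (n r1 r2 s : nat) :
  (1 <= n)%N -> (r1 <= n)%N -> (r2 <= n)%N -> (s <= Nmin n r1 r2)%N ->
  (forall q : {poly C}, IsLambda n r1 s s q ->
     forall j : nat, (j <= s)%N -> q.[j%:R] = lam0 C n r1 s j) /\
  (forall p : {poly C}, IsLambda n r1 r2 s p ->
     forall t : C,
       p.[t] = ('C(r2, s))%:R^-1 *
               \sum_(j < s.+1) cbinom t j * cbinom (r2%:R - t) (s - j)
                                * lam0 C n r1 s j).
Proof.
move=> _ _ le_r2n le_sN; split=> [q q_lambda j le_js | p p_lambda t].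
  have le_sN' : (s <= Nmin n r1 s)%N by move: le_sN; rewrite /Nmin; lia.
  rewrite (IsLambda_lambda_poly le_sN' _ q_lambda) ?lambda_poly_diag //.
  by move: le_sN'; rewrite /Nmin; lia.
by rewrite (IsLambda_lambda_poly le_sN le_r2n p_lambda) horner_lambda_poly.
Qed.
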